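(* Let $q=2^r$ with $r>1$ odd, and $n\ge 1$. Let $\alpha\in\mathbb{F}_q\setminus\{0,1\}$, and let $f\in\mathbb{F}_q[y]$ be a permutation polynomial of degree $q-2$. Then $$h(x_1,\dots,x_n,y)=\bigl(x_1^{q-1}\cdots x_n^{q-1}+\alpha\bigr)f(y)$$ is a permutation polynomial in $\mathbb{F}_q[x_1,\dots,x_n,y]$ of degree $n(q-1)+q-2$.
   Context: $\mathbb{F}_q$ is the finite field with $q$ elements. A polynomial in $m$ variables over $\mathbb{F}_q$ is a permutation polynomial (PP) if, for every $c\in\mathbb{F}_q$, the equation $h=c$ has exactly $q^{m-1}$ solutions in $\mathbb{F}_q^m$. A univariate PP is a polynomial inducing a bijection of $\mathbb{F}_q$. *)

From mathcomp Require Import all_boot all_algebra.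
From mathcomp Require Import mpoly.
Set Implicit Arguments. Unset Strict Implicit. Unset Printing Implicit Defensive.
Import GRing.Theory.
Local Open Scope ring_scope.

Definition is_univ_pp (F : finFieldType) (f : {poly F}) : Prop :=
  bijective (fun x : F => f.[x]).

Definition is_multi_pp (F : finFieldType) (m : nat) (h : {mpoly F[m]}) : Prop :=
  forall c : F,
    #|[set v : {ffun 'I_m -> F} | h.@[v] == c]| = (#|F| ^ m.-1)%N.

(* The polynomial (x_1^(q-1) ... x_n^(q-1) + alpha) f(y) in n+1 variables;
   x_i is 'X_i for i < n (lifted into 'I_(n+1)) and y is 'X_(ord_max). *)
Definition hpoly (F : finFieldType) (n : nat) (alpha : F) (f : {poly F})
  : {mpoly F[n.+1]} :=
  ((\prod_(i < n) 'X_(widen_ord (leqnSn n) i) ^+ (#|F|.-1)) + alpha%:MP)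
  * (map_poly (@mpolyC n.+1 F) f).['X_(@ord_max n)].

From mathcomp Require Import all_boot all_algebra finfield.
From mathcomp Require Import mpoly.
Set Implicit Arguments. Unset Strict Implicit. Unset Printing Implicit Defensive.
Import GRing.Theory.
Local Open Scope ring_scope.

(* Write q = #|F| and split a point of F^(n+1) as (u, y)
   with u in F^n.  By Fermat, x^(q-1) is the indicator of x <> 0, so
   Q(u) = u_1^(q-1) ... u_n^(q-1) only takes the values 0 and 1, and
   h(u, y) = (Q(u) + alpha) f(y).  When alpha and 1 + alpha are nonzero
   (in characteristic 2 this is alpha <> 0, 1), the factor Q(u) + alpha is
   never zero, so for fixed u the map y |-> (Q(u) + alpha) f(y) is a
   bijection of F; hence h = c has exactly one solution over every u, i.e.
   q^n solutions.  For the degree,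
   msize is additive (up to the shift by one) on the integral domain of
   multivariate polynomials; the first factor is a monomial of degree
   n(q-1) plus a constant, and the second is f evaluated at a variable, of
   the same degree as f. *)

(* A field has at least two elements, so the exponent q - 1 is positive. *)
Lemma card_pred_gt0 (F : finFieldType) : (0 < #|F|.-1)%N.
Proof. by rewrite -ltnS prednK ?finNzRing_gt1 // ltnW ?finNzRing_gt1. Qed.

Lemma expr_card_pred (F : finFieldType) (x : F) : x ^+ #|F|.-1 = (x != 0)%:R.
Proof.
have [->|x_neq0] := eqVneq x 0; first by rewrite expr0n eqn0Ngt card_pred_gt0.
apply: (mulIf x_neq0).
by rewrite -exprSr prednK ?expf_card ?mul1r // ltnW ?finNzRing_gt1.
Qed.

Definition indicator_prod (F : finFieldType) (n : nat) (u : 'I_n -> F) : F :=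
  \prod_(i < n) u i ^+ #|F|.-1.

(* Being a product of indicators, indicator_prod only takes the values 0, 1. *)
Lemma indicator_prod01 (F : finFieldType) (n : nat) (u : 'I_n -> F) :
  indicator_prod u = 0 \/ indicator_prod u = 1.
Proof.
apply: (big_ind (fun x => x = 0 \/ x = 1)); first by right.
  by move=> x y [->|->] [->|->]; rewrite ?mul0r ?mulr0 ?mul1r; auto.
by move=> i _; rewrite expr_card_pred; case: (_ != 0); auto.
Qed.

Definition restr (T : Type) (n : nat) (v : {ffun 'I_n.+1 -> T}) : {ffun 'I_n -> T} :=
  [ffun j => v (widen_ord (leqnSn n) j)].

Lemma lift_max_widen (n : nat) (j : 'I_n) : lift ord_max j = widen_ord (leqnSn n) j.
Proof. by apply: val_inj; rewrite /= /bump leqNgt ltn_ord. Qed.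

(* Counting core: if f permutes F and k never vanishes, then for every c the
   equation k(u) f(y) = c has exactly one solution y above each u in F^n. *)
Lemma card_scaled_bijection (F : finFieldType) (n : nat)
    (k : {ffun 'I_n -> F} -> F) (f : F -> F) (c : F) :
  bijective f -> (forall u, k u != 0) ->
  #|[set v : {ffun 'I_n.+1 -> F} | k (restr v) * f (v ord_max) == c]| =
  (#|F| ^ n)%N.
Proof.
move=> [g fK gK] k_neq0; set S := [set v | _].
have restr_inj : {in S &, injective (@restr F n)}.
  move=> v w; rewrite !inE => /eqP hv /eqP hw e_restr.
  have e_last : v ord_max = w ord_max.
    by apply: (can_inj fK); apply: (mulfI (k_neq0 (restr v))); rewrite hv e_restr hw.
  apply/ffunP => i; case: (unliftP ord_max i) => [j ->|->] //.
  by have := congr1 (fun u : {ffun 'I_n -> F} => u j) e_restr; rewrite !ffunE lift_max_widen.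
have restr_onto : (@restr F n) @: S = setT.
  apply/setP => u; rewrite inE; apply/imsetP.
  pose v := [ffun i => if unlift ord_max i is Some j then u j else g (c / k u)].
  have restr_v : restr v = u by apply/ffunP => j; rewrite !ffunE -lift_max_widen liftK.
  by exists v; rewrite // inE restr_v ffunE unlift_none gK mulrC divfK.
by rewrite -(card_in_imset restr_inj) restr_onto cardsT card_ffun card_ord.
Qed.

Lemma meval_poly_last (R : comNzRingType) (n : nat) (f : {poly R}) (v : 'I_n.+1 -> R) :
  ((map_poly (@mpolyC n.+1 R) f).['X_(@ord_max n)]).@[v] = f.[v ord_max].
Proof.
rewrite -horner_map /= mevalXU -map_poly_comp.
by rewrite (eq_map_poly (g := id)) ?map_poly_id // => x /=; rewrite mevalC.
Qed.

Lemma meval_hpoly (F : finFieldType) (n : nat) (alpha : F) (f : {poly F})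
    (v : {ffun 'I_n.+1 -> F}) :
  (hpoly n alpha f).@[v] = (indicator_prod (restr v) + alpha) * f.[v ord_max].
Proof.
rewrite /hpoly rmorphM rmorphD /= meval_poly_last mevalC rmorph_prod /=.
by congr ((_ + _) * _); apply: eq_bigr => i _; rewrite rmorphXn /= mevalXU ffunE.
Qed.

Lemma hpoly_pp (F : finFieldType) (n : nat) (alpha : F) (f : {poly F}) :
  alpha != 0 -> 1 + alpha != 0 -> is_univ_pp f -> is_multi_pp (hpoly n alpha f).
Proof.
move=> alpha_neq0 alpha1_neq0 f_pp c.
have factor_neq0 (u : {ffun 'I_n -> F}) : indicator_prod u + alpha != 0.
  by case: (indicator_prod01 u) => ->; rewrite ?add0r.
rewrite -(card_scaled_bijection c f_pp factor_neq0).
by apply: eq_card => v; rewrite !inE meval_hpoly.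
Qed.

Lemma msize_monomial_addC (R : nzRingType) (n : nat) (m : 'X_{1..n}) (c : R) :
  (0 < mdeg m)%N -> msize ('X_[m] + c%:MP) = (mdeg m).+1.
Proof.
move=> m_gt0; apply/eqP; rewrite eqn_leq; apply/andP; split.
  apply: leq_trans (mmeasureD_le _ _ _) _; rewrite msizeX geq_max leqnn /=.
  by rewrite mmeasureC; case: (_ != 0).
apply: msize_mdeg_lt; rewrite mcoeff_msupp mcoeffD mcoeffX mcoeffC eqxx.
by rewrite -mdeg_eq0 eqn0Ngt m_gt0 mulr0 addr0 oner_neq0.
Qed.

Lemma msize_poly_last (R : nzRingType) (n : nat) (f : {poly R}) :
  msize (map_poly (@mpolyC n.+1 R) f).['X_(@ord_max n)] = size f.
Proof.
pose y : 'X_{1..n.+1} := (U_(@ord_max n))%MM.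
have mdeg_y (i : nat) : mdeg (y *+ i) = i by rewrite mdegMn mdeg1 mul1n.
have -> : (map_poly (@mpolyC n.+1 R) f).['X_(@ord_max n)] =
          \sum_(i < size f) f`_i *: 'X_[y *+ i].
  have mpolyC_inj : injective (@mpolyC n.+1 R) by move=> a b /eqP; rewrite mpolyC_eq => /eqP.
  rewrite horner_coef size_map_inj_poly //; apply: eq_bigr => i _.
  by rewrite coef_map /= mul_mpolyC mpolyXn.
have [->|f_neq0] := eqVneq f 0; first by rewrite size_poly0 big_ord0 msize0.
apply/eqP; rewrite eqn_leq; apply/andP; split.
  apply: leq_trans (mmeasure_sum _ _ _ _) _; apply/bigmax_leqP => i _.
  by apply: leq_trans (msizeZ_le _ _) _; rewrite msizeX mdeg_y.
have top_lt : ((size f).-1 < size f)%N by rewrite prednK ?size_poly_gt0.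
apply: leq_trans (msize_mdeg_lt (m := y *+ (size f).-1) _); first by rewrite mdeg_y prednK ?size_poly_gt0.
rewrite mcoeff_msupp raddf_sum (bigD1 (Ordinal top_lt)) //=.
rewrite mcoeffZ mcoeffX eqxx mulr1 big1 ?addr0 -?lead_coefE ?lead_coef_eq0 //.
move=> i i_neq_top; rewrite mcoeffZ mcoeffX.
case: eqP => [e|]; last by rewrite mulr0.
by case/eqP: i_neq_top; apply: val_inj; rewrite /= -(mdeg_y i) e mdeg_y.
Qed.

Lemma msize_hpoly (F : finFieldType) (n : nat) (alpha : F) (f : {poly F}) :
  (1 <= n)%N -> f != 0 -> msize (hpoly n alpha f) = (n * #|F|.-1 + size f)%N.
Proof.
move=> n_gt0 f_neq0; rewrite /hpoly mprodXnE; set m := (\sum_(_ < n) _)%MM.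
have mdeg_m : mdeg m = (n * #|F|.-1)%N.
  rewrite /m mdeg_sum; under eq_bigr do rewrite mdegMn mdeg1 mul1n.
  by rewrite sum_nat_const card_ord.
have mdeg_m_gt0 : (0 < mdeg m)%N.
  by rewrite mdeg_m muln_gt0 n_gt0 card_pred_gt0.
have msize_neq0 (p : {mpoly F[n.+1]}) : msize p != 0%N -> p != 0.
  by apply: contraNneq => ->; rewrite msize0.
rewrite msizeM ?msize_neq0 ?msize_monomial_addC ?msize_poly_last ?size_poly_eq0 //.
by rewrite mdeg_m.
Qed.

Theorem mainTheorem8 (F : finFieldType) (r n : nat) (alpha : F) (f : {poly F}) :
  #|F| = (2 ^ r)%N -> (1 < r)%N -> odd r -> (1 <= n)%N ->
  alpha != 0 -> alpha != 1 ->
  is_univ_pp f -> size f = (#|F|.-2).+1 ->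
  is_multi_pp (hpoly n alpha f) /\
  msize (hpoly n alpha f) = (n * #|F|.-1 + #|F|.-2).+1.
Proof.
move=> cardF r_gt1 _ n_gt0 alpha_neq0 alpha_neq1 f_pp size_f.
have char2 : 2 \in [pchar F] by exact: card_finPcharP cardF isT.
(* In characteristic 2, 1 + alpha = 0 would force alpha = -1 = 1. *)
have alpha1_neq0 : 1 + alpha != 0.
  by rewrite addrC addr_eq0 oppr_pchar2.
have f_neq0 : f != 0 by rewrite -size_poly_gt0 size_f.
split; first exact: hpoly_pp.
by rewrite msize_hpoly // size_f addnS.
Qed.
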